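(* Let $L$ be a complete semilattice. Then $L$ is shrinkable if and only if for all $S,T\in\Sigma L$ such that the meet $\sigma_L(S)\wedge\sigma_L(T)$ exists in $L$, the meet $S\wedge T$ exists in $\Sigma L$ and $\sigma_L(S\wedge T)=\sigma_L(S)\wedge\sigma_L(T)$.
   Context: A complete semilattice is a poset in which every nonempty subset has a join (written $\sum$; a bottom element need not exist). For $x,x_i\in L$ write $x\le^*\sum_{i\in I}x_i$ if $x\le\sum_{i\in I_0}x_i$ for some finite nonempty $I_0\subseteq I$. $L$ is shrinkable if whenever $x\le\sum_{i\in I}x_i$ there is a family $(y_j)_{j\in J}$ in $L$ with $x=\sum_j y_j$ and $y_j\le^*\sum_{i\in I}x_i$ for every $j$. Suspension: on nonempty subsets of $L$ define the preorder $S\le T$ iff every $s\in S$ satisfies $s\le^*\sum T$ (i.e. $s$ is below the join of finitely many elements of $T$); $\Sigma L$ is the set of equivalence classes of nonempty subsets under the associated equivalence, with the induced partial order (joins in $\Sigma L$ are given by unions). $\sigma_L:\Sigma L\to L$ is $S\mapsto\sum S$. *)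

From Stdlib Require Import List.
Import ListNotations.

Section Defs.
Context {L : Type} (le : L -> L -> Prop).

Definition is_join (S : L -> Prop) (j : L) : Prop :=
  (forall s, S s -> le s j) /\ (forall u, (forall s, S s -> le s u) -> le j u).

Definition is_meet2 (a b m : L) : Prop :=
  le m a /\ le m b /\ (forall u, le u a -> le u b -> le u m).

Definition nonempty (S : L -> Prop) : Prop := exists x, S x.

Definition complete_semilattice : Prop :=
  (forall x, le x x) /\
  (forall x y, le x y -> le y x -> x = y) /\
  (forall x y z, le x y -> le y z -> le x z) /\
  (forall S : L -> Prop, nonempty S -> exists j, is_join S j).

Definition le_star_fam {I : Type} (x : L) (xs : I -> L) : Prop :=
  exists (I0 : list I) (j : L),
    I0 <> [] /\ is_join (fun y => exists i, In i I0 /\ y = xs i) j /\ le x j.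

Definition le_star_set (x : L) (T : L -> Prop) : Prop :=
  exists (T0 : list L) (j : L),
    T0 <> [] /\ (forall y, In y T0 -> T y) /\
    is_join (fun y => In y T0) j /\ le x j.

Definition range {I : Type} (xs : I -> L) : L -> Prop := fun y => exists i, xs i = y.

Definition shrinkable : Prop :=
  forall (I : Type) (xs : I -> L) (x s : L),
    inhabited I -> is_join (range xs) s -> le x s ->
    exists (J : Type) (ys : J -> L),
      inhabited J /\ is_join (range ys) x /\ (forall j, le_star_fam (ys j) xs).

Definition susp_le (S T : L -> Prop) : Prop :=
  forall s, S s -> le_star_set s T.

(* M represents the meet S /\ T in Sigma L (meets in the quotient poset of the
   preorder susp_le on nonempty subsets) *)
Definition susp_is_meet (S T M : L -> Prop) : Prop :=
  nonempty M /\ susp_le M S /\ susp_le M T /\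
  (forall U, nonempty U -> susp_le U S -> susp_le U T -> susp_le U M).

End Defs.

(* Shrinkability says exactly that every element below the join of a nonempty
   set S is the join of elements each finitely below S.  Given that, the meet of
   S and T in the suspension is represented by the set of elements finitely
   below both S and T: applying shrinkability twice (below s, then below t)
   writes s /\ t as a join of such elements.  Conversely, taking T = {x} with
   x <= sum S, the meet of S and {x} in the suspension is a set with join x
   whose elements are all finitely below S. *)

From Stdlib Require Import List.
Import ListNotations.

Section SuspensionMeets.
Context {L : Type} (le : L -> L -> Prop).

Definition shrinkable_sets : Prop :=
  forall (S : L -> Prop) (s y : L),
    nonempty S -> is_join le S s -> le y s ->
    exists Y : L -> Prop,
      nonempty Y /\ is_join le Y y /\ (forall z, Y z -> le_star_set le z S).

Lemma is_join_ext (P Q : L -> Prop) (j : L) :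
  (forall y, P y <-> Q y) -> is_join le P j -> is_join le Q j.
Proof.
  intros E [Hub Hleast]; split.
  - intros y Hy; apply Hub, E, Hy.
  - intros u Hu; apply Hleast; intros y Hy; apply Hu, E, Hy.
Qed.

Lemma range_proj1_sig (S : L -> Prop) (z : L) :
  range (@proj1_sig L S) z <-> S z.
Proof.
  split.
  - intros [[x Hx] <-]; exact Hx.
  - intros Hz; exists (exist _ z Hz); reflexivity.
Qed.

Lemma map_of_in_range {I : Type} (xs : I -> L) (T0 : list L) :
  (forall y, In y T0 -> range xs y) -> exists I0, map xs I0 = T0.
Proof.
  induction T0 as [|a T0 IH]; intros Hrange.
  - exists []; reflexivity.
  - destruct (Hrange a (or_introl eq_refl)) as [i Hi].
    destruct IH as [I0 HI0]; [intros y Hy; apply Hrange; right; exact Hy|].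
    exists (i :: I0); simpl; rewrite Hi, HI0; reflexivity.
Qed.

Lemma le_star_fam_iff_set {I : Type} (xs : I -> L) (y : L) :
  le_star_fam le y xs <-> le_star_set le y (range xs).
Proof.
  assert (Hmap : forall I0 z, In z (map xs I0) <-> exists i, In i I0 /\ z = xs i).
  { intros I0 z; rewrite in_map_iff; split.
    - intros [i [Hi HI0]]; exists i; auto.
    - intros [i [HI0 ->]]; exists i; auto. }
  split.
  - intros [I0 [j [Hne [Hj Hyj]]]].
    exists (map xs I0), j; split; [|split; [|split]].
    + destruct I0; [contradiction | discriminate].
    + intros z Hz; apply Hmap in Hz; destruct Hz as [i [_ ->]]; exists i; reflexivity.
    + eapply is_join_ext; [|exact Hj]; intros z; rewrite Hmap; tauto.
    + exact Hyj.
  - intros [T0 [j [Hne [Hin [Hj Hyj]]]]].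
    destruct (map_of_in_range xs T0 Hin) as [I0 <-].
    exists I0, j; split; [|split].
    + intros ->; apply Hne; reflexivity.
    + eapply is_join_ext; [|exact Hj]; intros z; rewrite Hmap; tauto.
    + exact Hyj.
Qed.

Lemma le_star_set_ext (S S' : L -> Prop) (y : L) :
  (forall z, S z <-> S' z) -> le_star_set le y S -> le_star_set le y S'.
Proof.
  intros E [T0 [j [Hne [Hin HT0]]]].
  exists T0, j; split; [exact Hne | split; [intros z Hz; apply E, Hin, Hz | exact HT0]].
Qed.

Lemma is_join_of_refinement (Y M : L -> Prop) (m : L) :
  is_join le Y m ->
  (forall y, Y y -> exists Z, is_join le Z y /\ (forall z, Z z -> M z)) ->
  (forall z, M z -> le z m) ->
  is_join le M m.
Proof.
  intros [_ HYleast] Hrefine Hub; split; [exact Hub|].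
  intros u Hu; apply HYleast; intros y Hy.
  destruct (Hrefine y Hy) as [Z [[_ HZleast] HZM]].
  apply HZleast; intros z Hz; apply Hu, HZM, Hz.
Qed.

Lemma shrinkable_iff_sets : shrinkable le <-> shrinkable_sets.
Proof.
  split.
  - intros Hsh S s y [s0 Hs0] HS Hys.
    destruct (Hsh {x | S x} (@proj1_sig L S) y s) as [J [ys [[j0] [Hys_join Hstar]]]].
    + exact (inhabits (exist _ s0 Hs0)).
    + eapply is_join_ext; [|exact HS]; intros z; rewrite range_proj1_sig; tauto.
    + exact Hys.
    + exists (range ys); split; [exists (ys j0), j0; reflexivity |].
      split; [exact Hys_join |].
      intros z [j <-].
      apply (le_star_set_ext (range (@proj1_sig L S))); [apply range_proj1_sig|].
      apply le_star_fam_iff_set, Hstar.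
  - intros Hsh I xs x s [i0] Hs Hxs.
    destruct (Hsh (range xs) s x) as [Y [[y0 Hy0] [HY Hstar]]];
      [exists (xs i0), i0; reflexivity | exact Hs | exact Hxs |].
    exists {y | Y y}, (@proj1_sig L Y); split; [|split].
    + exact (inhabits (exist _ y0 Hy0)).
    + eapply is_join_ext; [|exact HY]; intros z; rewrite range_proj1_sig; tauto.
    + intros [y Hy]; apply le_star_fam_iff_set, Hstar, Hy.
Qed.

Section Order.
Hypothesis le_refl : forall x, le x x.
Hypothesis le_trans : forall x y z, le x y -> le y z -> le x z.

Lemma is_join_singleton (x : L) : is_join le (fun y => y = x) x.
Proof.
  split; [intros y ->; apply le_refl|].
  intros u Hu; apply Hu; reflexivity.
Qed.

Lemma is_meet2_of_le (s x : L) : le x s -> is_meet2 le s x x.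
Proof. intros Hxs; repeat split; auto. Qed.

Lemma le_star_set_of_mem (S : L -> Prop) (y : L) : S y -> le_star_set le y S.
Proof.
  intros Hy; exists [y], y; repeat split.
  - discriminate.
  - intros z [<-|[]]; exact Hy.
  - intros z [<-|[]]; apply le_refl.
  - intros u Hu; apply Hu; left; reflexivity.
  - apply le_refl.
Qed.

Lemma le_star_set_le_trans (S : L -> Prop) (y z : L) :
  le z y -> le_star_set le y S -> le_star_set le z S.
Proof.
  intros Hzy [T0 [j [Hne [Hin [Hj Hyj]]]]].
  exists T0, j; split; [exact Hne | split; [exact Hin | split; [exact Hj | eauto]]].
Qed.

Lemma le_star_set_le_join (S : L -> Prop) (y s : L) :
  le_star_set le y S -> is_join le S s -> le y s.
Proof.
  intros [T0 [j [_ [Hin [[_ Hj] Hyj]]]]] [Hub _].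
  apply le_trans with j; [exact Hyj|].
  apply Hj; intros w Hw; apply Hub, Hin, Hw.
Qed.

Section CommonLowerPart.
Variables (S T : L -> Prop) (s t m : L).
Hypotheses (HneS : nonempty S) (HneT : nonempty T).
Hypotheses (HS : is_join le S s) (HT : is_join le T t) (Hm : is_meet2 le s t m).

Definition common_lower (z : L) : Prop := le_star_set le z S /\ le_star_set le z T.

Lemma common_lower_le_meet (z : L) : common_lower z -> le z m.
Proof.
  intros [HzS HzT]; apply Hm.
  - exact (le_star_set_le_join S z s HzS HS).
  - exact (le_star_set_le_join T z t HzT HT).
Qed.

Lemma susp_is_meet_common_lower :
  nonempty common_lower -> susp_is_meet le S T common_lower.
Proof.
  intros Hne; repeat split; [exact Hne | intros z [Hz _]; exact Hz
                            | intros z [_ Hz]; exact Hz |].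
  intros U _ HUS HUT u Hu; apply le_star_set_of_mem; split; auto.
Qed.

Hypothesis Hsh : shrinkable_sets.

Lemma shrink_common_lower (y : L) :
  le_star_set le y S -> le y t ->
  exists Z, nonempty Z /\ is_join le Z y /\ (forall z, Z z -> common_lower z).
Proof.
  intros HyS Hyt.
  destruct (Hsh T t y HneT HT Hyt) as [Z [HneZ [HZ HZT]]].
  exists Z; split; [exact HneZ | split; [exact HZ |]].
  intros z Hz; split; [| exact (HZT z Hz)].
  apply (le_star_set_le_trans S y); [apply HZ, Hz | exact HyS].
Qed.

Lemma is_join_common_lower : nonempty common_lower /\ is_join le common_lower m.
Proof.
  destruct Hm as [Hms [Hmt _]].
  destruct (Hsh S s m HneS HS Hms) as [Y [[y0 Hy0] [HY HYS]]].
  assert (Hyt : forall y, Y y -> le y t).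
  { intros y Hy; apply le_trans with m; [apply HY, Hy | exact Hmt]. }
  split.
  - destruct (shrink_common_lower y0 (HYS y0 Hy0) (Hyt y0 Hy0)) as [Z [[z Hz] [_ HZ]]].
    exists z; apply HZ, Hz.
  - apply (is_join_of_refinement Y); [exact HY | | exact common_lower_le_meet].
    intros y Hy.
    destruct (shrink_common_lower y (HYS y Hy) (Hyt y Hy)) as [Z [_ HZ]].
    exists Z; exact HZ.
Qed.

End CommonLowerPart.

Lemma shrinkable_sets_of_susp_meet :
  (forall (S T : L -> Prop) (s t m : L),
     nonempty S -> nonempty T ->
     is_join le S s -> is_join le T t -> is_meet2 le s t m ->
     exists M : L -> Prop, susp_is_meet le S T M /\ is_join le M m) ->
  shrinkable_sets.
Proof.
  intros Hmeet S s y HneS HS Hys.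
  destruct (Hmeet S (fun z => z = y) s y y) as [M [[HneM [HMS _]] HM]];
    [exact HneS | exists y; reflexivity | exact HS | apply is_join_singleton
    | apply is_meet2_of_le, Hys |].
  exists M; split; [exact HneM | split; [exact HM | exact HMS]].
Qed.

End Order.
End SuspensionMeets.

Theorem mainTheorem3 (L : Type) (le : L -> L -> Prop)
  (HL : complete_semilattice le) :
  shrinkable le <->
  (forall (S T : L -> Prop) (s t m : L),
     nonempty S -> nonempty T ->
     is_join le S s -> is_join le T t -> is_meet2 le s t m ->
     exists M : L -> Prop, susp_is_meet le S T M /\ is_join le M m).
Proof.
  destruct HL as [le_refl [_ [le_trans _]]].
  rewrite shrinkable_iff_sets.
  split; [|exact (shrinkable_sets_of_susp_meet le le_refl)].
  intros Hsh S T s t m HneS HneT HS HT Hm.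
  destruct (is_join_common_lower le le_trans S T s t m HneS HneT HS HT Hm Hsh)
    as [Hne HM].
  exists (common_lower le S T); split; [|exact HM].
  exact (susp_is_meet_common_lower le le_refl S T Hne).
Qed.
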